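(* Let $2\le g<h$. Then for every self-adjoint tuple $X\in SM_n(\mathbb C)^g$, $X\in\mathcal D_{F^{[g]}}$ if and only if $(X,0)\in\mathcal D_{F^{[h]}}$ (with $0$ the zero tuple of length $h-g$). Moreover $\mathcal P_g\mathcal D_{F^{[h]}}=\mathcal D_{F^{[g]}}$.
   Context: $F^{[g]}$ is defined recursively: $F^{[2]}=(\sigma_z,\sigma_x)$ with $\sigma_z=\begin{bmatrix}1&0\\0&-1\end{bmatrix}$, $\sigma_x=\begin{bmatrix}0&1\\1&0\end{bmatrix}$, and if $F^{[g]}=(F_1,\dots,F_g)$ then $F^{[g+1]}=(F_1\otimes\sigma_z,\dots,F_g\otimes\sigma_z,I\otimes\sigma_x)$. For a self-adjoint matrix tuple $A$, $\mathcal D_A=\bigcup_n\{X\in SM_n(\mathbb C)^g: I-\sum_i A_i\otimes X_i\succeq0\}$. For a set $K$ of $h$-tuples of self-adjoint matrices and $g<h$, the coordinate projection $\mathcal P_gK$ is the set of $X\in SM_n^g$ (any $n$) for which there is $Y\in SM_n^{h-g}$ with $(X,Y)\in K$. *)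

From HB Require Import structures.
From mathcomp Require Import all_boot all_order all_algebra.
From mathcomp Require Import mxtens.
Set Implicit Arguments. Unset Strict Implicit. Unset Printing Implicit Defensive.
Import Order.TTheory GRing.Theory Num.Theory.
Local Open Scope ring_scope.
Local Open Scope sesquilinear_scope.

(* Scalars: C is any numClosedFieldType (e.g. the complex numbers);
   for z : C, 0 <= z means z is a nonnegative real. *)

Definition selfadj {C : numClosedFieldType} {n : nat} (M : 'M[C]_n) : Prop :=
  M ^t* = M.

Definition psd {C : numClosedFieldType} {n : nat} (M : 'M[C]_n) : Prop :=
  selfadj M /\ forall v : 'cV[C]_n, 0 <= (v ^t* *m M *m v) ord0 ord0.

Definition sigma_z {C : numClosedFieldType} : 'M[C]_2 :=
  \matrix_(i < 2, j < 2) (if i == j then (if i == 0 :> nat then 1 else -1) else 0).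
Definition sigma_x {C : numClosedFieldType} : 'M[C]_2 :=
  \matrix_(i < 2, j < 2) (if i == j then 0 else 1).

(* Fk k i = the i-th entry (0-based, i <= k) of F^[k+1], a matrix of size 2^k.
   F^[1] := (1) (the 1x1 identity); then the recursion
   F^[k+2] = (F_1 (x) sigma_z, ..., F_(k+1) (x) sigma_z, I (x) sigma_x)
   yields F^[2] = (sigma_z, sigma_x) as in the paper. *)
Fixpoint Fk {C : numClosedFieldType} (k : nat) : nat -> 'M[C]_(2 ^ k) :=
  match k return nat -> 'M[C]_(2 ^ k) with
  | 0 => fun _ => 1%:M
  | k'.+1 => fun i =>
      castmx (esym (expnSr 2 k'), esym (expnSr 2 k'))
        (if (i < k'.+1)%N then Fk k' i *t sigma_z else (1%:M : 'M[C]_(2 ^ k')) *t sigma_x)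
  end.

Definition F {C : numClosedFieldType} (g : nat) : nat -> 'M[C]_(2 ^ g.-1) := Fk g.-1.

(* A g-tuple of n x n matrices is represented by X : nat -> 'M_n,
   only the entries X 0, ..., X (g-1) being relevant. *)
Definition SMtuple {C : numClosedFieldType} {n : nat} (g : nat) (X : nat -> 'M[C]_n) : Prop :=
  forall i, (i < g)%N -> selfadj (X i).

Definition inD {C : numClosedFieldType} {d n : nat} (g : nat)
  (A : nat -> 'M[C]_d) (X : nat -> 'M[C]_n) : Prop :=
  SMtuple g X /\ psd (1%:M - \sum_(i < g) (A i *t X i)).

Definition tcat {C : numClosedFieldType} {n : nat} (g : nat)
  (X Y : nat -> 'M[C]_n) : nat -> 'M[C]_n :=
  fun i => if (i < g)%N then X i else Y (i - g)%N.

Definition projD {C : numClosedFieldType} {n : nat} (g h : nat)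
  (K : (nat -> 'M[C]_n) -> Prop) (X : nat -> 'M[C]_n) : Prop :=
  SMtuple g X /\ exists Y : nat -> 'M[C]_n, SMtuple (h - g) Y /\ K (tcat g X Y).

From mathcomp Require Import all_boot all_order all_algebra.
From mathcomp Require Import mxtens zify ring.
Set Implicit Arguments. Unset Strict Implicit. Unset Printing Implicit Defensive.
Import Order.TTheory GRing.Theory Num.Theory.
Local Open Scope ring_scope.
Local Open Scope sesquilinear_scope.

(* Write L_k(X) = I - sum_i F^[k]_i (x) X_i and view it as a 2^(k-1) x 2^(k-1)
   block matrix.  Since F^[k+1]_i = F^[k]_i (x) sigma_z for i < k and the last
   entry is I (x) sigma_x, compressing L_(k+1)(X) to the blocks of even index
   gives L_k(X): membership descends from F^[h] to F^[g].  Conversely, if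
   X_k = 0 then L_(k+1)(X) is, up to a permutation, L_k(X) (+) L_k(-X), and
   L_k(-X) is congruent to L_k(X) through a signed permutation anticommuting
   with every F^[k]_i; so (X, 0) ascends from F^[g] to F^[h]. *)

Section PsdBlocks.

Variable C : numClosedFieldType.

Lemma psd_add N (A B : 'M[C]_N) : psd A -> psd B -> psd (A + B).
Proof.
move=> [hA qA] [hB qB]; split; first by rewrite /selfadj raddfD /= map_mxD hA hB.
by move=> v; rewrite mulmxDr mulmxDl mxE; apply: addr_ge0.
Qed.

Lemma adjmxM m n p (A : 'M[C]_(m, n)) (B : 'M[C]_(n, p)) :
  (A *m B) ^t* = B ^t* *m A ^t*.
Proof. by rewrite trmx_mul map_mxM. Qed.

Lemma psd_congr N p (M : 'M[C]_N) (P : 'M[C]_(N, p)) :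
  psd M -> psd (P ^t* *m M *m P).
Proof.
move=> [hM qM]; split; first by rewrite /selfadj !adjmxM trmxCK hM mulmxA.
by move=> v; rewrite -!mulmxA mulmxA -adjmxM mulmxA; apply: qM.
Qed.

Lemma psd_reindex N p (M : 'M[C]_N) (f : 'I_p -> 'I_N) (c : 'I_p -> C) :
  psd M -> psd (\matrix_(i, j) ((c i)^* * M (f i) (f j) * c j)).
Proof.
pose P : 'M[C]_(N, p) := \matrix_(K, i) ((K == f i)%:R * c i).
suff -> : \matrix_(i, j) ((c i)^* * M (f i) (f j) * c j) = P ^t* *m M *m P.
  exact: psd_congr.
have PtM i L : (P ^t* *m M) i L = (c i)^* * M (f i) L.
  rewrite mxE (bigD1 (f i)) //= big1 ?addr0 => [|K /negPf fK]; rewrite !mxE.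
    by rewrite eqxx rmorphM /= conjC_nat mul1r.
  by rewrite fK mul0r rmorph0 mul0r.
apply/matrixP => i j; rewrite !mxE (bigD1 (f j)) //= big1 ?addr0 => [|L /negPf fL].
  by rewrite PtM !mxE eqxx mul1r.
by rewrite !mxE fL mul0r mulr0.
Qed.

(* Blocks are indexed by nat; only the B a b with a, b < m are used. *)
Definition blockmx m n (B : nat -> nat -> 'M[C]_n) : 'M[C]_(m * n) :=
  \matrix_(I, J) B (mxtens_unindex I).1 (mxtens_unindex J).1
                   (mxtens_unindex I).2 (mxtens_unindex J).2.
Arguments blockmx m {n} B.

Lemma psd_blockmx_compress m p n (B B' : nat -> nat -> 'M[C]_n)
    (f : nat -> nat) (c : nat -> C) :
  (forall a, (a < p)%N -> (f a < m)%N) ->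
  (forall a b, (a < p)%N -> (b < p)%N -> B' a b = ((c a)^* * c b) *: B (f a) (f b)) ->
  psd (blockmx m B) -> psd (blockmx p B').
Proof.
move=> fm B'E /(psd_reindex
  (fun J => mxtens_index (Ordinal (fm _ (ltn_ord (mxtens_unindex J).1)),
                          (mxtens_unindex J).2))
  (fun J => c (mxtens_unindex J).1)).
congr psd; apply/matrixP => I J.
by rewrite !mxE !mxtens_indexK /= B'E ?mxtens_index_proof1 // mxE mulrAC.
Qed.

Lemma psd_blockmx_add m n (B B1 B2 : nat -> nat -> 'M[C]_n) :
  (forall a b, (a < m)%N -> (b < m)%N -> B a b = B1 a b + B2 a b) ->
  psd (blockmx m B1) -> psd (blockmx m B2) -> psd (blockmx m B).
Proof.
move=> BE P1 P2; have := psd_add P1 P2; congr psd; apply/matrixP => I J.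
by rewrite !mxE BE ?mxtens_index_proof1 // mxE.
Qed.

End PsdBlocks.

Section CliffordPencil.

Variable C : numClosedFieldType.

Definition sigma_z_coef (s s' : nat) : C :=
  if s == s' then (if s == 0%N then 1 else -1) else 0.
Definition sigma_x_coef (s s' : nat) : C := if s == s' then 0 else 1.

Fixpoint Fcoef (k i a b : nat) : C :=
  match k with
  | 0 => (a == b)%:R
  | k'.+1 =>
      if (i < k'.+1)%N
      then Fcoef k' i (a %/ 2)%N (b %/ 2)%N * sigma_z_coef (a %% 2)%N (b %% 2)%N
      else (a %/ 2 == b %/ 2)%N%:R * sigma_x_coef (a %% 2)%N (b %% 2)%N
  end.

Lemma FcoefS k i a b : Fcoef k.+1 i a b =
  if (i < k.+1)%N
  then Fcoef k i (a %/ 2)%N (b %/ 2)%N * sigma_z_coef (a %% 2)%N (b %% 2)%N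
  else (a %/ 2 == b %/ 2)%N%:R * sigma_x_coef (a %% 2)%N (b %% 2)%N.
Proof. by []. Qed.

Lemma FkE k i (a b : 'I_(2 ^ k)) : (Fk k i : 'M[C]_(2 ^ k)) a b = Fcoef k i a b.
Proof.
elim: k i a b => [|k IH] i a b /=; first by rewrite mxE.
by rewrite castmxE; case: ifP => _; rewrite !mxE ?IH.
Qed.

Definition pencil_block k g n (X : nat -> 'M[C]_n) (a b : nat) : 'M[C]_n :=
  (a == b)%:R%:M - \sum_(i < g) Fcoef k i a b *: X i.

Lemma pencil_blockmx k g n (X : nat -> 'M[C]_n) :
  1%:M - \sum_(i < g) (Fk k i *t X i) = blockmx (2 ^ k) (pencil_block k g X).
Proof.
apply/matrixP => I J; rewrite !mxE !summxE; congr (_ - _).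
  rewrite -(inj_eq (can_inj (@mxtens_unindexK _ _))) xpair_eqE.
  by rewrite -(mulr_natr (_%:R)) -natrM mulnb.
by apply: eq_bigr => i _; rewrite !mxE FkE.
Qed.

Lemma pencil_block_double k n (X : nat -> 'M[C]_n) a b :
  pencil_block k.+1 k.+2 X (2 * a) (2 * b) = pencil_block k k.+1 X a b.
Proof.
rewrite /pencil_block eqn_pmul2l // big_ord_recr /= !mulKn // !modnMr ltnn.
rewrite /sigma_x_coef eqxx mulr0 scale0r addr0; congr (_ - _).
by apply: eq_bigr => i _; rewrite ltn_ord /sigma_z_coef /= mulr1.
Qed.

Lemma inD_F_restrict_step k n (X : nat -> 'M[C]_n) :
  inD k.+2 (F k.+2) X -> inD k.+1 (F k.+1) X.
Proof.
rewrite /inD /F /= !pencil_blockmx => -[SX PX]; split.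
  by move=> i lt_ik; apply: SX; apply: ltnW.
apply: psd_blockmx_compress (fun a => 2 * a)%N (fun _ => 1) _ _ PX.
  by move=> a lt_a; rewrite expnS ltn_pmul2l.
by move=> a b _ _; rewrite rmorph1 mulr1 scale1r pencil_block_double.
Qed.

Definition bit_sign (s : nat) : C := if s == 0%N then 1 else -1.

Fixpoint flip_index (k a : nat) : nat :=
  match k with
  | 0 => 1 - a
  | k'.+1 => 2 * flip_index k' (a %/ 2) + a %% 2
  end.

Fixpoint flip_sign (k a : nat) : C :=
  match k with
  | 0 => bit_sign a
  | k'.+1 => flip_sign k' (a %/ 2)%N * bit_sign (a %% 2)%N
  end.

Lemma flip_indexS k a : flip_index k.+1 a = (2 * flip_index k (a %/ 2) + a %% 2)%N.
Proof. by []. Qed.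

Lemma flip_signS k a : flip_sign k.+1 a = flip_sign k (a %/ 2)%N * bit_sign (a %% 2)%N.
Proof. by []. Qed.

Lemma half_lt_pow2 k a : (a < 2 ^ k.+1)%N -> (a %/ 2 < 2 ^ k)%N.
Proof. by rewrite ltn_divLR // -expnSr. Qed.

Lemma double_add_bitK x s :
  (s < 2)%N -> ((2 * x + s) %/ 2 = x)%N /\ ((2 * x + s) %% 2 = s)%N.
Proof. by move=> lt_s2; split; lia. Qed.

Lemma flip_index_lt k a : (a < 2 ^ k.+1)%N -> (flip_index k a < 2 ^ k.+1)%N.
Proof.
elim: k a => [|k IH] a lt_a /=; first by lia.
have := IH _ (half_lt_pow2 lt_a); have := ltn_pmod a (isT : (0 < 2)%N).
rewrite (expnS 2 k.+1); lia.
Qed.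

Lemma flip_indexK k a : (a < 2 ^ k.+1)%N -> flip_index k (flip_index k a) = a.
Proof.
elim: k a => [|k IH] a lt_a /=; first by lia.
have [-> ->] := double_add_bitK (flip_index k (a %/ 2)) (ltn_pmod a (isT : (0 < 2)%N)).
by rewrite IH ?half_lt_pow2 // mulnC -divn_eq.
Qed.

Lemma flip_index_eq k a b : (a < 2 ^ k.+1)%N -> (b < 2 ^ k.+1)%N ->
  (flip_index k a == flip_index k b) = (a == b).
Proof.
move=> lt_a lt_b; apply/eqP/eqP => [eq_ab|-> //].
by rewrite -(flip_indexK lt_a) eq_ab flip_indexK.
Qed.

Lemma bit_sign_sqr s : bit_sign s * bit_sign s = 1.
Proof. by rewrite /bit_sign; case: ifP; rewrite ?mulrNN mulr1. Qed.

Lemma flip_sign_sqr k a : flip_sign k a * flip_sign k a = 1.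
Proof.
elim: k a => [|k IH] a /=; first exact: bit_sign_sqr.
by rewrite mulrACA IH bit_sign_sqr mulr1.
Qed.

Lemma flip_sign_conj k a : (flip_sign k a)^* = flip_sign k a.
Proof.
have bit_sign_conj s : (bit_sign s)^* = bit_sign s.
  by rewrite /bit_sign; case: ifP; rewrite ?rmorph1 ?rmorphN1.
elim: k a => [|k IH] a /=; first exact: bit_sign_conj.
by rewrite rmorphM /= IH bit_sign_conj.
Qed.

Lemma sigma_z_coef_sign s s' : (s < 2)%N -> (s' < 2)%N ->
  bit_sign s * sigma_z_coef s s' * bit_sign s' = sigma_z_coef s s'.
Proof.
by case: s => [|[|s]] // _; case: s' => [|[|s']] // _;
  rewrite /bit_sign /sigma_z_coef /=; ring.
Qed.

Lemma sigma_x_coef_sign s s' : (s < 2)%N -> (s' < 2)%N ->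
  bit_sign s * sigma_x_coef s s' * bit_sign s' = - sigma_x_coef s s'.
Proof.
by case: s => [|[|s]] // _; case: s' => [|[|s']] // _;
  rewrite /bit_sign /sigma_x_coef /=; ring.
Qed.

(* The signed permutation U_k given by flip_index and flip_sign is
   U_0 = sigma_x sigma_z and U_(k+1) = U_k (x) sigma_z; it anticommutes with
   every entry of F^[k+2]. *)
Lemma Fcoef_flip k i a b :
  (i < k.+2)%N -> (a < 2 ^ k.+1)%N -> (b < 2 ^ k.+1)%N ->
  flip_sign k a * Fcoef k.+1 i (flip_index k a) (flip_index k b) * flip_sign k b
  = - Fcoef k.+1 i a b.
Proof.
elim: k i a b => [|k IH] i a b lt_i lt_a lt_b.
  case: i lt_i => [|[|i]] // _; case: a lt_a => [|[|a]] // _;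
  by case: b lt_b => [|[|b]] // _; rewrite /= /bit_sign /sigma_z_coef /sigma_x_coef /=; ring.
have bit_a := ltn_pmod a (isT : (0 < 2)%N); have bit_b := ltn_pmod b (isT : (0 < 2)%N).
rewrite (FcoefS k.+1 i (flip_index _ _)) (FcoefS k.+1 i a) !flip_indexS !flip_signS.
have [-> ->] := double_add_bitK (flip_index k (a %/ 2)) bit_a.
have [-> ->] := double_add_bitK (flip_index k (b %/ 2)) bit_b.
case: ifP => lt_ik.
  rewrite -[in RHS](sigma_z_coef_sign bit_a bit_b) -mulNr.
  rewrite -(IH _ _ _ lt_ik (half_lt_pow2 lt_a) (half_lt_pow2 lt_b)); ring.
rewrite flip_index_eq ?half_lt_pow2 //; case: eqP => [<-|_]; last first.
  by rewrite !mul0r !mulr0 mul0r oppr0.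
rewrite !mul1r -(sigma_x_coef_sign bit_a bit_b) -[RHS]mul1r.
by rewrite -(flip_sign_sqr k (a %/ 2)); ring.
Qed.

Lemma pencil_block_opp k n (X : nat -> 'M[C]_n) a b :
  (a < 2 ^ k.+1)%N -> (b < 2 ^ k.+1)%N ->
  pencil_block k.+1 k.+2 (fun i => - X i) a b =
  ((flip_sign k a)^* * flip_sign k b) *:
    pencil_block k.+1 k.+2 X (flip_index k a) (flip_index k b).
Proof.
move=> lt_a lt_b; rewrite /pencil_block flip_sign_conj scalerBr scaler_sumr.
rewrite flip_index_eq // scale_scalar_mx; congr (_%:M - _).
  by case: eqP => [->|_]; rewrite ?flip_sign_sqr ?mulr1 ?mulr0.
by apply: eq_bigr => i _; rewrite scalerA scalerN -scaleNr mulrAC Fcoef_flip.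
Qed.

Lemma eqn_halves a b : (a == b) = (a %/ 2 == b %/ 2)%N && (a %% 2 == b %% 2)%N.
Proof.
apply/eqP/andP => [-> //|[/eqP eq_half /eqP eq_bit]].
by rewrite (divn_eq a 2) (divn_eq b 2) eq_half eq_bit.
Qed.

(* Once the last entry vanishes, F^[k+3] acts as F^[k+2] (x) sigma_z, whose
   pencil is the direct sum of the pencils at X and at -X. *)
Lemma pencil_block_split k n (X : nat -> 'M[C]_n) a b : X k.+2 = 0 ->
  pencil_block k.+2 k.+3 X a b =
    ((a %% 2 == 0)%N%:R * (b %% 2 == 0)%N%:R) *:
      pencil_block k.+1 k.+2 X (a %/ 2)%N (b %/ 2)%N
  + ((a %% 2 == 1)%N%:R * (b %% 2 == 1)%N%:R) *:
      pencil_block k.+1 k.+2 (fun i => - X i) (a %/ 2)%N (b %/ 2)%N.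
Proof.
move=> X0; rewrite /pencil_block eqn_halves.
have -> : \sum_(i < k.+3) Fcoef k.+2 i a b *: X i =
          \sum_(i < k.+2) Fcoef k.+2 i a b *: X i.
  by rewrite big_ord_recr /= X0 scaler0 addr0.
under eq_bigr => i _ do rewrite FcoefS ltn_ord mulrC -scalerA.
rewrite -scaler_sumr; set T := \sum_(i < k.+2) Fcoef k.+1 i _ _ *: X i.
have -> : \sum_(i < k.+2) Fcoef k.+1 i (a %/ 2) (b %/ 2) *: - X i = - T.
  by rewrite -sumrN; apply: eq_bigr => i _; rewrite scalerN.
move: (a %% 2)%N (b %% 2)%N (ltn_pmod a (isT : (0 < 2)%N)) (ltn_pmod b (isT : (0 < 2)%N)).
case=> [|[|//]] [|[|//]] _ _; rewrite /sigma_z_coef /=.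
all: by rewrite ?andbT ?andbF ?mulr1 ?mulr0 ?mul0r ?scale1r ?scale0r ?addr0 ?add0r ?scaleN1r ?opprK ?subr0 ?raddf0.
Qed.

Lemma inD_F_extend_step k n (X : nat -> 'M[C]_n) :
  X k.+2 = 0 -> inD k.+2 (F k.+2) X -> inD k.+3 (F k.+3) X.
Proof.
rewrite /inD /F /= !pencil_blockmx => X0 [SX PX]; split.
  move=> i; rewrite ltnS leq_eqVlt => /orP[/eqP->|/SX //].
  by rewrite X0 /selfadj trmx0 map_mx0.
have PnX : psd (blockmx (2 ^ k.+1) (pencil_block k.+1 k.+2 (fun i => - X i))).
  exact: psd_blockmx_compress (@flip_index_lt k) (@pencil_block_opp k n X) PX.
apply: (psd_blockmx_add (fun a b _ _ => pencil_block_split a b X0)).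
  apply: psd_blockmx_compress (fun a => a %/ 2)%N (fun a => (a %% 2 == 0)%N%:R) _ _ PX.
    exact: half_lt_pow2.
  by move=> a b _ _; rewrite conjC_nat.
apply: psd_blockmx_compress (fun a => a %/ 2)%N (fun a => (a %% 2 == 1)%N%:R) _ _ PnX.
  exact: half_lt_pow2.
by move=> a b _ _; rewrite conjC_nat.
Qed.

Lemma inD_agree g d n (A : nat -> 'M[C]_d) (X Y : nat -> 'M[C]_n) :
  (forall i, (i < g)%N -> X i = Y i) -> inD g A X -> inD g A Y.
Proof.
move=> XY [SX PX]; split; first by move=> i lt_ig; rewrite -XY //; apply: SX.
by under eq_bigr => i _ do rewrite -XY //.
Qed.

Lemma inD_F_restrict g h n (X : nat -> 'M[C]_n) :
  (0 < g)%N -> (g <= h)%N -> inD h (F h) X -> inD g (F g) X.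
Proof.
move=> g_gt0 /subnKC <-; elim: (h - g)%N => [|j IH]; first by rewrite addn0.
by case: g g_gt0 IH => // g _ IH; rewrite addnS => /inD_F_restrict_step.
Qed.

Lemma inD_F_extend g h n (X : nat -> 'M[C]_n) :
  (2 <= g)%N -> (g <= h)%N -> (forall i, (g <= i)%N -> X i = 0) ->
  inD g (F g) X -> inD h (F h) X.
Proof.
move=> g_ge2 /subnKC <- X0 DX; elim: (h - g)%N => [|j IH]; first by rewrite addn0.
case: g g_ge2 X0 DX IH => [|[|g]] // _ X0 _ IH; rewrite addnS.
by apply: inD_F_extend_step IH; apply: X0; apply: leq_addr.
Qed.

End CliffordPencil.

Theorem mainTheorem5 (C : numClosedFieldType) (g h : nat) :
  (2 <= g)%N -> (g < h)%N ->
  (forall (n : nat) (X : nat -> 'M[C]_n),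
      SMtuple g X ->
      (inD g (F g) X <-> inD h (F h) (tcat g X (fun _ => 0)))) /\
  (forall (n : nat) (X : nat -> 'M[C]_n),
      projD g h (inD h (F h)) X <-> inD g (F g) X).
Proof.
move=> g_ge2 /ltnW le_gh; have g_gt0 : (0 < g)%N by apply: ltnW.
have tcat_lt n (X Y : nat -> 'M[C]_n) i : (i < g)%N -> tcat g X Y i = X i.
  by rewrite /tcat => ->.
have extend_iff n (X : nat -> 'M[C]_n) :
    inD g (F g) X <-> inD h (F h) (tcat g X (fun _ => 0)).
  split=> [DX | /(inD_F_restrict g_gt0 le_gh)]; last exact/inD_agree/tcat_lt.
  apply: inD_F_extend g_ge2 le_gh _ (inD_agree _ DX) => [i|i /tcat_lt //].
  by rewrite /tcat ltnNge => ->.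
split=> [n X _ | n X]; first exact: extend_iff.
split=> [[_ [Y [_ /(inD_F_restrict g_gt0 le_gh)]]] | DX].
  exact/inD_agree/tcat_lt.
split; first by case: DX.
exists (fun _ => 0); split; last exact/extend_iff.
by move=> i _; rewrite /selfadj trmx0 map_mx0.
Qed.
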